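(* Let $C=(1,c_2,\dots,c_n)$ be a canonical system whose subsystem $C'=(1,c_2,\dots,c_{n-1})$ is noncanonical, and let $w'$ be the minimum counterexample to $C'$. Then $c_n\le w'$.
   Context: A system is a tuple $C=(c_1,\dots,c_n)$ of integers with $1=c_1<c_2<\dots<c_n$; for $k\le n$, $(c_1,\dots,c_k)$ is a subsystem. For a positive integer $v$, $\mathrm{opt}_C(v)$ is the minimum of $\sum_i x_i$ over $x\in\mathbb{Z}_{\ge0}^n$ with $\sum_i c_ix_i=v$. The greedy representation of $v$ is produced by: for $i=n$ down to $1$, while $c_i\le$ remaining value, take a coin $c_i$. $\mathrm{grd}_C(v)$ is its number of coins. A positive integer $w$ is a counterexample if $\mathrm{opt}_C(w)<\mathrm{grd}_C(w)$; $C$ is canonical if it has none, noncanonical otherwise. *)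

From mathcomp Require Import all_boot.
Set Implicit Arguments. Unset Strict Implicit. Unset Printing Implicit Defensive.

Definition is_system (C : seq nat) : Prop :=
  C <> [::] /\ head 0 C = 1 /\ sorted ltn C.

Definition value (C x : seq nat) : nat := sumn [seq p.1 * p.2 | p <- zip C x].

Definition represents (C x : seq nat) (v : nat) : Prop :=
  size x = size C /\ value C x = v.

Definition is_opt (C : seq nat) (v k : nat) : Prop :=
  (exists x, represents C x v /\ sumn x = k) /\
  (forall x, represents C x v -> k <= sumn x).

(* greedy: for i = n down to 1, take as many c_i as fit (i.e. v %/ c_i coins) *)
Fixpoint grd_rev (D : seq nat) (v : nat) : nat :=
  match D with
  | [::] => 0
  | c :: D' => v %/ c + grd_rev D' (v %% c)
  end.
Definition grd (C : seq nat) (v : nat) : nat := grd_rev (rev C) v.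

Definition counterexample (C : seq nat) (w : nat) : Prop :=
  0 < w /\ exists k, is_opt C w k /\ k < grd C w.

Definition canonical (C : seq nat) : Prop := forall w, ~ counterexample C w.

Definition min_counterexample (C : seq nat) (w : nat) : Prop :=
  counterexample C w /\ forall u, u < w -> ~ counterexample C u.

From mathcomp Require Import all_boot.

Set Implicit Arguments.
Unset Strict Implicit.
Unset Printing Implicit Defensive.

(* A value below the largest coin c_n can only be represented without c_n, and
   the greedy algorithm skips c_n on it; so a counterexample of C' smaller than
   c_n is also one of C. *)

Lemma value_rcons (C x : seq nat) (c a : nat) : size C = size x ->
  value (rcons C c) (rcons x a) = value C x + c * a.
Proof. by move=> eq_sz; rewrite /value (zip_rcons _ _ eq_sz) map_rcons sumn_rcons. Qed.

Lemma represents_rcons0 (C x : seq nat) (c v : nat) :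
  represents C x v -> represents (rcons C c) (rcons x 0) v.
Proof.
move=> [eq_sz <-]; split; first by rewrite !size_rcons eq_sz.
by rewrite value_rcons ?eq_sz // muln0 addn0.
Qed.

Lemma represents_rcons_small (C y : seq nat) (c v : nat) : v < c ->
  represents (rcons C c) y v -> exists2 x, y = rcons x 0 & represents C x v.
Proof.
move=> lt_vc; case/lastP: y => [|x a] [eq_sz val_y]; first by rewrite size_rcons in eq_sz.
move: eq_sz; rewrite !size_rcons => -[eq_sz].
rewrite value_rcons // in val_y.
have a0 : a = 0.
  apply/eqP; rewrite -leqn0 leqNgt; apply: contraL lt_vc => a_gt0.
  by rewrite -leqNgt -val_y (leq_trans (leq_pmulr c a_gt0)) ?leq_addl.
by exists x; rewrite ?a0 //; split; rewrite // -val_y a0 muln0 addn0.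
Qed.

Lemma is_opt_rcons_small (C : seq nat) (c v k : nat) : v < c ->
  is_opt C v k -> is_opt (rcons C c) v k.
Proof.
move=> lt_vc [[x [rep_x <-]] opt_k]; split.
  by exists (rcons x 0); rewrite sumn_rcons addn0; split; first exact: represents_rcons0.
move=> y /(represents_rcons_small lt_vc) [x' -> rep_x'].
by rewrite sumn_rcons addn0; apply: opt_k.
Qed.

Lemma grd_rcons_small (C : seq nat) (c v : nat) : v < c ->
  grd (rcons C c) v = grd C v.
Proof. by move=> lt_vc; rewrite /grd rev_rcons /= divn_small // modn_small. Qed.

Lemma counterexample_rcons_small (C : seq nat) (c w : nat) : w < c ->
  counterexample C w -> counterexample (rcons C c) w.
Proof.
move=> lt_wc [w_gt0 [k [opt_k lt_k_grd]]]; split => //; exists k.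
by rewrite grd_rcons_small //; split => //; apply: is_opt_rcons_small.
Qed.

Theorem lemma2 (C' : seq nat) (cn w' : nat) :
  is_system (rcons C' cn) ->
  canonical (rcons C' cn) ->
  ~ canonical C' ->
  min_counterexample C' w' ->
  cn <= w'.
Proof.
move=> _ canC _ [cex_w' _]; rewrite leqNgt; apply/negP => lt_w'cn.
exact: canC w' (counterexample_rcons_small lt_w'cn cex_w').
Qed.
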